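(* Let $n\ge1$ and $k_1,\dots,k_n\in\mathbb N$, and write $W_a=\chi_{k_1}\circ\cdots\circ\chi_{k_n}(a)$ for $a\in\{1,2,3\}$. Then: (i) $W_3$ is a prefix of $W_2$; (ii) if $k_n\ge2$, then the word obtained from $W_1$ by deleting its last letter is a prefix of $W_3$, and the last letter of $W_1$ is $1$ if $n$ is even and $2$ if $n$ is odd; (iii) if $k_n=1$ and $n\ge2$, then $W_3$ is a prefix of $W_1$.
   Context: For $k\in\mathbb N$, $\chi_k$ is the substitution on the alphabet $\{1,2,3\}$ given by $1\mapsto2$, $2\mapsto31^k$, $3\mapsto31^{k-1}$, extended to words by concatenation. *)

From mathcomp Require Import all_boot.
Set Implicit Arguments. Unset Strict Implicit. Unset Printing Implicit Defensive.

(* The substitution chi_k on letters: 1 -> 2, 2 -> 3 1^k, 3 -> 3 1^(k-1).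
   (Values on other naturals are irrelevant and set to the empty word.) *)
Definition chi (k : nat) (a : nat) : seq nat :=
  match a with
  | 1 => [:: 2]
  | 2 => 3 :: nseq k 1
  | 3 => 3 :: nseq k.-1 1
  | _ => [::]
  end.

Definition chi_word (k : nat) (w : seq nat) : seq nat := flatten (map (chi k) w).

(* W ks a = chi_{k_1} o ... o chi_{k_n} (a) for ks = [:: k_1; ...; k_n]
   (chi_{k_n} is applied first). *)
Definition W (ks : seq nat) (a : nat) : seq nat :=
  foldr chi_word [:: a] ks.

From mathcomp Require Import all_boot.

(* Substitutions preserve prefixes, and chi_k(3) = 3 1^(k-1) is a prefix of
   chi_k(2) = 3 1^k; this gives (i), and (iii) reduces to (i) because chi_1 fixes
   3 and sends 1 to 2.  For (ii), with k_n >= 2 we have W_1 = V(2) and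
   V(31) a prefix of W_3, where V = chi_{k_1} o ... o chi_{k_(n-1)}.  The words
   V(2) and V(31) agree up to the last letter of V(2): that letter is 2 and V(31)
   continues with 31 when n-1 is even, and it is 1 and V(31) continues with 2 when
   n-1 is odd; one more substitution exchanges the two situations. *)

Definition chi_iter (ks w : seq nat) : seq nat := foldr chi_word w ks.

Lemma chi_word_cat k u v : chi_word k (u ++ v) = chi_word k u ++ chi_word k v.
Proof. by rewrite /chi_word map_cat flatten_cat. Qed.

Lemma chi_word_rcons k u a : chi_word k (rcons u a) = chi_word k u ++ chi k a.
Proof. by rewrite -cats1 chi_word_cat /chi_word /= cats0. Qed.

Lemma chi_word_prefix k u v : prefix u v -> prefix (chi_word k u) (chi_word k v).
Proof. by case/prefixP => t ->; rewrite chi_word_cat prefix_prefix. Qed.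

Lemma chi_iter_prefix ks u v : prefix u v -> prefix (chi_iter ks u) (chi_iter ks v).
Proof. by elim: ks => //= k ks IH /IH; apply: chi_word_prefix. Qed.

Lemma W_rcons ks k a : W (rcons ks k) a = chi_iter ks (chi k a).
Proof. by rewrite /W foldr_rcons /= /chi_word /= cats0. Qed.

Lemma rcons_nseq (T : Type) n (x : T) : rcons (nseq n x) x = nseq n.+1 x.
Proof. by elim: n => //= n ->. Qed.

Lemma chi_prefix_32 k : 0 < k -> prefix (chi k 3) (chi k 2).
Proof.
case: k => // k _; change (prefix (3 :: nseq k 1) (3 :: nseq k.+1 1)).
by rewrite -rcons_nseq -rcons_cons prefix_rcons.
Qed.

Lemma W_rcons_prefix_32 ks k : 0 < k -> prefix (W (rcons ks k) 3) (W (rcons ks k) 2).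
Proof. by move=> k_gt0; rewrite !W_rcons chi_iter_prefix ?chi_prefix_32. Qed.

Definition forks {T : eqType} (x : T) (y u v : seq T) :=
  exists2 p, u = rcons p x & prefix (p ++ y) v.

Lemma forks_take_last {T : eqType} (x0 x : T) y u v :
  forks x y u v -> prefix (take (size u).-1 u) v /\ last x0 u = x.
Proof.
case=> p -> pyv; rewrite size_rcons -cats1 take_size_cat // last_cat.
by split=> //; apply: catl_prefix pyv.
Qed.

Lemma forks_chi_word_2 k u v : 0 < k ->
  forks 2 [:: 3; 1] u v -> forks 1 [:: 2] (chi_word k u) (chi_word k v).
Proof.
case: k => // k _ [p -> /prefixP [r ->]].
exists (chi_word k.+1 p ++ 3 :: nseq k 1).
  by rewrite chi_word_rcons rcons_cat rcons_cons rcons_nseq.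
by apply/prefixP; exists (chi_word k.+1 r); rewrite !chi_word_cat -!catA.
Qed.

Lemma forks_chi_word_1 k u v : 0 < k ->
  forks 1 [:: 2] u v -> forks 2 [:: 3; 1] (chi_word k u) (chi_word k v).
Proof.
case: k => // k _ [p -> /prefixP [r ->]].
exists (chi_word k.+1 p); first by rewrite chi_word_rcons cats1.
by apply/prefixP; exists (nseq k 1 ++ chi_word k.+1 r); rewrite !chi_word_cat -!catA.
Qed.

Lemma chi_iter_forks ks : all (fun k => 0 < k) ks ->
  if odd (size ks) then forks 1 [:: 2] (chi_iter ks [:: 2]) (chi_iter ks [:: 3; 1])
  else forks 2 [:: 3; 1] (chi_iter ks [:: 2]) (chi_iter ks [:: 3; 1]).
Proof.
elim: ks => [_|k ks IH /andP [k_gt0 /IH]] /=; first by exists [::].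
by case: odd; [apply: forks_chi_word_1 | apply: forks_chi_word_2].
Qed.

Lemma W_rcons1 ks : W (rcons ks 1) 3 = W ks 3 /\ W (rcons ks 1) 1 = W ks 2.
Proof. by rewrite !W_rcons. Qed.

Theorem lemma3p13 (ks : seq nat) :
  0 < size ks -> all (fun k => 0 < k) ks ->
  [/\ prefix (W ks 3) (W ks 2),
      (2 <= last 0 ks ->
         prefix (take (size (W ks 1)).-1 (W ks 1)) (W ks 3) /\
         last 0 (W ks 1) = (if odd (size ks) then 2 else 1))
    & (last 0 ks = 1 -> 2 <= size ks -> prefix (W ks 3) (W ks 1))].
Proof.
case/lastP: ks => [//|ks k] _; rewrite all_rcons => /andP [k_gt0 ks_pos].
rewrite last_rcons size_rcons; split.
- exact: W_rcons_prefix_32.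
- case: k k_gt0 => [|[|k]] // _ _; rewrite !W_rcons /=.
  have prefix_31 : prefix (chi_iter ks [:: 3; 1]) (chi_iter ks (3 :: 1 :: nseq k 1)).
    exact: chi_iter_prefix (prefix_prefix [:: 3; 1] _).
  have := chi_iter_forks ks ks_pos.
  by case: odd => /(forks_take_last 0) [pre ->]; split=> //; apply: prefix_trans pre prefix_31.
- move=> -> {k k_gt0}; case/lastP: ks ks_pos => [//|ks k].
  rewrite all_rcons => /andP [k_gt0 _] _; have [-> ->] := W_rcons1 (rcons ks k).
  exact: W_rcons_prefix_32.
Qed.
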